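(* Fix $\alpha,\beta\in(0,1)$ and $0<c<1/2$. There exist constants $C_\beta>0$ (depending only on $\beta$) and $K,L>0$ (depending only on $\alpha,\beta,c$) such that for the decoupled process with parameters $(\mathcal{P}_\infty,v_0,\mathcal{P}_\infty,\alpha,\beta)$ and all $t$, with probability at least $1-e^{-(1+o(1))t^{2c}}$ (the $o(1)$ tending to $0$ as $t\to\infty$) there exist indices $k_0<k_1<\dots<k_l$ with $l\ge L\,t^{0.5-c}$ such that the values $\sigma_{k_0}(t),\dots,\sigma_{k_l}(t)$ are pairwise distinct and, for each $i=0,1,\dots,l$, $$\big|\sigma_{k_i}(t)-\beta t-C_\beta\, t^{c}\sqrt{t}\, i\big|\le K\,t^{c}\sqrt{t}.$$
   Context: Decoupled process on the infinite path $\mathcal{P}_\infty$ with vertices $v_0\to v_1\to\cdots$, root $v_0$, $p(v_i)=v_{i-1}$. Fix $\alpha,\beta\in[0,1]$. Let $Z_0=+1$, $Z_1,Z_2,\dots$ i.i.d. uniform on $\{-1,+1\}$, $Z_\infty=\bot$; counter $\mathrm{count}_0=1$; $\mathrm{origin}_0(v_0)=0$ (and always $0$), $\mathrm{origin}_0(v_i)=\infty$ for $i\ge1$; $g_t(v)=Z_{\mathrm{origin}_t(v)}$. Update from $t$ to $t+1$ (independent choices): if $g_t(v)=g_t(p(v))=\bot$ then $\mathrm{origin}_{t+1}(v)=\infty$; if $g_t(v)=\bot\ne g_t(p(v))$: w.p. $1-\alpha$, $\mathrm{origin}_{t+1}(v)=\mathrm{origin}_t(p(v))$, and w.p. $\alpha$,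 $\mathrm{origin}_{t+1}(v)$ is the current counter value and the counter is incremented; if $g_t(v)\ne\bot$, $v\neq v_0$: w.p. $\beta$, $\mathrm{origin}_{t+1}(v)=\mathrm{origin}_t(p(v))$, otherwise unchanged. $k$-frontier: $\sigma_k(t)=\max\{i\in\mathbb{N}:\mathrm{origin}_t(v_i)\le k\}$. *)

From Stdlib Require Import Reals Lra Lia List Arith ClassicalEpsilon.
Import ListNotations.
Open Scope R_scope.

(* State of the decoupled process on the infinite path P_oo.
   orig i = origin_t(v_i); None encodes the value oo (so g_t(v_i) = bot).
   cnt = current counter value. *)
Record state := mkState { orig : nat -> option nat; cnt : nat }.

Definition init : state :=
  mkState (fun i => match i with O => Some O | S _ => None end) 1%nat.

(* Probability that the coin of vertex v_i comes up "true" in state st: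
   - g(v)=bot, g(p v) <> bot : true = "fresh origin" (prob alpha)
   - g(v) <> bot, v <> v_0   : true = "copy parent"  (prob beta)
   - otherwise the coin is irrelevant and always false. *)
Definition coin_p (alpha beta : R) (st : state) (i : nat) : R :=
  match i with
  | O => 0
  | S j => match orig st i, orig st j with
           | None, None => 0
           | None, Some _ => alpha
           | Some _, _ => beta
           end
  end.

Definition is_new (st : state) (b : nat -> bool) (i : nat) : bool :=
  match i with
  | O => false
  | S j => match orig st i, orig st j with
           | None, Some _ => b i
           | _, _ => false
           end
  end.

Fixpoint count_new (st : state) (b : nat -> bool) (n : nat) : nat :=
  match n with
  | O => O
  | S m => (count_new st b m + if is_new st b m then 1 else 0)%nat
  end.

(* One synchronous update, with the coin of v_i being nth i bs false.
   Fresh counter values are handed out in increasing vertex order. *)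
Definition step (st : state) (bs : list bool) : state :=
  let b i := nth i bs false in
  mkState
    (fun i => match i with
              | O => Some O
              | S j => match orig st i, orig st j with
                       | None, None => None
                       | None, Some o =>
                           if b i then Some (cnt st + count_new st b i)%nat
                           else Some o
                       | Some o, po => if b i then po else Some o
                       end
              end)
    (cnt st + count_new st b (length bs))%nat.

Fixpoint bools (n : nat) : list (list bool) :=
  match n with
  | O => [ [] ]
  | S m => flat_map (fun l => [false :: l; true :: l]) (bools m)
  end.

Fixpoint wprod (f : nat -> bool -> R) (bs : list bool) (i : nat) : R :=
  match bs with
  | [] => 1
  | b :: r => f i b * wprod f r (S i)
  end.

Definition coin_weight (alpha beta : R) (st : state) (bs : list bool) : R :=
  wprod (fun i b => if b then coin_p alpha beta st i
                    else 1 - coin_p alpha beta st i) bs O.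

(* Law of the state at time t, as a finite list of (probability, state).
   From time s to s+1 coins are drawn for v_0..v_{s+1}: at time s only
   v_0..v_s can have a non-bot value, so no other vertex can change. *)
Fixpoint dist (alpha beta : R) (t : nat) : list (R * state) :=
  match t with
  | O => [ (1, init) ]
  | S s => flat_map (fun p =>
             map (fun bs => (fst p * coin_weight alpha beta (snd p) bs,
                             step (snd p) bs))
                 (bools (S (S s))))
             (dist alpha beta s)
  end.

Definition prob (alpha beta : R) (t : nat) (E : state -> Prop) : R :=
  fold_right Rplus 0
    (map (fun p => if excluded_middle_informative (E (snd p)) then fst p else 0)
         (dist alpha beta t)).

(* frontier st k n  <->  n = sigma_k = max { i | origin(v_i) <= k } *)
Definition frontier (st : state) (k n : nat) : Prop :=
  (exists o, orig st n = Some o /\ (o <= k)%nat) /\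
  (forall i o, orig st i = Some o -> (o <= k)%nat -> (i <= n)%nat).

Definition good_event (beta Cb K L c : R) (t : nat) (st : state) : Prop :=
  exists (l : nat) (ks ss : nat -> nat),
    L * Rpower (INR t) (/2 - c) <= INR l /\
    (forall i, (i < l)%nat -> (ks i < ks (S i))%nat) /\
    (forall i, (i <= l)%nat -> frontier st (ks i) (ss i)) /\
    (forall i j, (i <= l)%nat -> (j <= l)%nat -> i <> j -> ss i <> ss j) /\
    (forall i, (i <= l)%nat ->
       Rabs (INR (ss i) - beta * INR t
             - Cb * Rpower (INR t) c * sqrt (INR t) * INR i)
       <= K * Rpower (INR t) c * sqrt (INR t)).

From Pilot Require Import Defs.
From Stdlib Require Import Reals Lra Lia List ZArith ClassicalEpsilon FunctionalExtensionality.
Open Scope R_scope.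

(* Reachable states have origins supported on v_0..v_t and
   nondecreasing along the path ([WF]), so the k-frontier [front] is the last
   vertex with origin <= k.  One step moves a frontier as follows: if it is
   detached from the tip it advances by one with probability beta,
   independently of the past; if it sits at the tip it detaches with
   probability alpha (the new tip receives a fresh origin) and otherwise
   follows the tip.  Hence the frontier of the newest origin value at time
   tau detaches within delta ~ 2 t^(2c)/alpha steps except with probability
   (1 - alpha)^delta, and then performs a Bernoulli(beta) walk, which a
   Chernoff bound keeps within 4 t^c sqrt t of its mean.  Choosing tau_i so
   that this mean is beta t + 11 t^c sqrt t i, for the L t^(1/2 - c) windows
   i, a union bound shows that all windows are hit with probability at least
   1 - exp (- t^(2c)) once t is large; hitting all windows yields the good
   event deterministically. *)

Definition sumL {A} (l : list A) (f : A -> R) : R := fold_right Rplus 0 (map f l).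

Lemma sumL_app {A} (l1 l2 : list A) f : sumL (l1 ++ l2) f = sumL l1 f + sumL l2 f.
Proof. induction l1 as [|a l1 IH]; unfold sumL in *; simpl; [lra|]. rewrite IH. lra. Qed.

Lemma sumL_flat_map {A B} (g : A -> list B) l f :
  sumL (flat_map g l) f = sumL l (fun a => sumL (g a) f).
Proof. induction l as [|a l IH]; [reflexivity|]. simpl. rewrite sumL_app, IH. reflexivity. Qed.

Lemma sumL_map {A B} (g : A -> B) l f : sumL (map g l) f = sumL l (fun a => f (g a)).
Proof. unfold sumL. rewrite map_map. reflexivity. Qed.

Lemma sumL_ext_in {A} (l : list A) f g :
  (forall a, In a l -> f a = g a) -> sumL l f = sumL l g.
Proof.
  induction l as [|a l IH]; intros H; [reflexivity|]. unfold sumL in *; simpl.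
  rewrite H by (left; auto). rewrite IH; auto. intros; apply H; right; auto.
Qed.

Lemma sumL_le {A} (l : list A) f g :
  (forall a, In a l -> f a <= g a) -> sumL l f <= sumL l g.
Proof.
  induction l as [|a l IH]; intros H; unfold sumL in *; simpl; [lra|].
  apply Rplus_le_compat; [apply H; left; auto | apply IH; intros; apply H; right; auto].
Qed.

Lemma sumL_plus {A} (l : list A) f g : sumL l (fun a => f a + g a) = sumL l f + sumL l g.
Proof. induction l as [|a l IH]; unfold sumL in *; simpl; [lra|]. rewrite IH. lra. Qed.

Lemma sumL_scal {A} (l : list A) c f : sumL l (fun a => c * f a) = c * sumL l f.
Proof. induction l as [|a l IH]; unfold sumL in *; simpl; [lra|]. rewrite IH. lra. Qed.

Lemma bools_length n bs : In bs (bools n) -> length bs = n.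
Proof.
  revert bs; induction n as [|n IH]; simpl; intros bs H.
  - destruct H as [<-|[]]; reflexivity.
  - apply in_flat_map in H. destruct H as [l [Hl H]].
    destruct H as [<-|[<-|[]]]; simpl; rewrite (IH l Hl); reflexivity.
Qed.

Lemma sumL_bools_S n f :
  sumL (bools (S n)) f = sumL (bools n) (fun l => f (false :: l) + f (true :: l)).
Proof. simpl. rewrite sumL_flat_map. apply sumL_ext_in. intros. unfold sumL; simpl. lra. Qed.

Section IndependentCoins.
Variable f : nat -> bool -> R.
Hypothesis f_total : forall m, f m true + f m false = 1.

Lemma wprod_total n i : sumL (bools n) (fun bs => wprod f bs i) = 1.
Proof.
  revert i; induction n as [|n IH]; intros i.
  - unfold sumL; simpl. lra.
  - rewrite sumL_bools_S.
    transitivity (sumL (bools n) (fun l => (f i false + f i true) * wprod f l (S i))).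
    + apply sumL_ext_in; intros; simpl; lra.
    + rewrite sumL_scal, IH, (Rplus_comm (f i false)), f_total. lra.
Qed.

Lemma wprod_marginal n i j (phi : bool -> R) :
  sumL (bools n) (fun bs => wprod f bs i * phi (nth j bs false)) =
  if (j <? n)%nat then f (i + j)%nat true * phi true + f (i + j)%nat false * phi false
  else phi false.
Proof.
  revert i j; induction n as [|n IH]; intros i j.
  - unfold sumL; simpl. destruct j; simpl; lra.
  - rewrite sumL_bools_S. destruct j as [|j].
    + transitivity (sumL (bools n) (fun l => (f i false * phi false + f i true * phi true)
                                            * wprod f l (S i))).
      * apply sumL_ext_in; intros; simpl; lra.
      * rewrite sumL_scal, wprod_total, Nat.add_0_r. simpl. lra.
    + transitivity (sumL (bools n) (fun l => (f i false + f i true) *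
                                            (wprod f l (S i) * phi (nth j l false)))).
      * apply sumL_ext_in; intros; simpl; lra.
      * rewrite sumL_scal, IH, (Rplus_comm (f i false)), f_total.
        replace (i + S j)%nat with (S i + j)%nat by lia.
        replace (S j <? S n)%nat with (j <? n)%nat by reflexivity. lra.
Qed.
End IndependentCoins.

Lemma exp_le_mono x y : x <= y -> exp x <= exp y.
Proof. intros [H|H]; [left; apply exp_increasing; auto | rewrite H; right; reflexivity]. Qed.

Lemma exp_pow a n : exp a ^ n = exp (INR n * a).
Proof.
  induction n as [|n IH]; simpl.
  - rewrite Rmult_0_l, exp_0. reflexivity.
  - rewrite IH, <- exp_plus. f_equal. destruct n; simpl; ring.
Qed.

Lemma exp_quadratic_bound l : -1/2 <= l <= 1/2 -> exp l <= 1 + l + 2 * l ^ 2.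
Proof.
  intros H. pose proof (exp_ineq1_le (- l)).
  assert (exp l * exp (- l) = 1)
    by (rewrite <- exp_plus; replace (l + - l) with 0 by ring; apply exp_0).
  pose proof (exp_pos l). pose proof (exp_pos (- l)).
  assert (exp l * (1 - l) <= 1) by nra.
  nra.
Qed.

Lemma bernoulli_mgf_bound b l : 0 <= b <= 1 -> -1/2 <= l <= 1/2 ->
  b * exp l + 1 - b <= exp (b * l + 2 * l ^ 2).
Proof.
  intros Hb Hl. pose proof (exp_quadratic_bound l Hl).
  pose proof (exp_ineq1_le (b * l + 2 * l ^ 2)).
  assert (b * exp l <= b * (1 + l + 2 * l ^ 2)) by (apply Rmult_le_compat_l; lra).
  assert (b * (2 * l ^ 2) <= 2 * l ^ 2) by (assert (0 <= l ^ 2) by nra; nra).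
  lra.
Qed.

Lemma exp_ge_pow (T : R) (N : nat) : 0 <= T -> (1 <= N)%nat -> (T / INR N) ^ N <= exp T.
Proof.
  intros HT HN. assert (1 <= INR N) by (apply (le_INR 1); auto).
  replace T with (INR N * (T / INR N)) at 2 by (field; lra).
  rewrite <- exp_pow. apply pow_incr. split.
  - apply Rmult_le_pos; [lra | left; apply Rinv_0_lt_compat; lra].
  - pose proof (exp_ineq1_le (T / INR N)). lra.
Qed.

Lemma Rpower_ge1 x e : 1 <= x -> 0 <= e -> 1 <= Rpower x e.
Proof. intros Hx He. rewrite <- (Rpower_O x) at 1 by lra. apply Rle_Rpower; auto. Qed.

Lemma nat_above (x : R) : exists n : nat, x <= INR n.
Proof.
  destruct (archimed x) as [H1 _].
  exists (Z.to_nat (up x)). destruct (Z_le_gt_dec 0 (up x)) as [Hz|Hz].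
  - rewrite INR_IZR_INZ, Z2Nat.id by auto. lra.
  - replace (Z.to_nat (up x)) with 0%nat by lia.
    apply Z.gt_lt, IZR_lt in Hz. simpl in *. lra.
Qed.

Lemma nat_ceil (x : R) : 0 <= x -> exists n : nat, x <= INR n <= x + 1.
Proof.
  intros Hx. destruct (archimed x) as [H1 H2].
  assert (Hz : (0 <= up x)%Z) by (apply le_IZR; simpl; lra).
  exists (Z.to_nat (up x)). rewrite INR_IZR_INZ, Z2Nat.id by auto. lra.
Qed.

Lemma nat_floor (x : R) : 0 <= x -> exists n : nat, INR n <= x < INR n + 1.
Proof.
  intros Hx. destruct (archimed x) as [H1 H2].
  assert (Hz : (0 < up x)%Z) by (apply lt_IZR; simpl; lra).
  exists (Z.to_nat (up x - 1)). rewrite INR_IZR_INZ, Z2Nat.id by lia.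
  rewrite minus_IZR. simpl. lra.
Qed.

Lemma sum_ge_term (f : nat -> R) l i :
  (forall j, 0 <= f j) -> (i <= l)%nat -> f i <= sum_f_R0 f l.
Proof.
  intros Hf; induction l as [|l IH]; intros Hi.
  - replace i with 0%nat by lia. simpl. lra.
  - simpl. pose proof (Hf (S l)). destruct (Nat.eq_dec i (S l)) as [->|Hne].
    + pose proof (cond_pos_sum f l Hf). lra.
    + pose proof (IH ltac:(lia)). lra.
Qed.

Definition WF (u : nat) (st : state) : Prop :=
  orig st 0 = Some 0%nat /\
  (forall i, orig st i = None <-> (u < i)%nat) /\
  (forall i j o1 o2, (i <= j)%nat -> orig st i = Some o1 -> orig st j = Some o2 ->
     (o1 <= o2)%nat) /\
  (forall i o, orig st i = Some o -> (o < cnt st)%nat).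

Lemma WF_init : WF 0 init.
Proof.
  split; [reflexivity|]. split; [|split].
  - intros [|i]; simpl; split; intros H; try discriminate; try lia; auto.
  - intros [|i] [|j] o1 o2 Hij H1 H2; simpl in *; try discriminate; try lia.
    inversion H1; subst; lia.
  - intros [|i] o H; simpl in *; inversion H; lia.
Qed.

Lemma WF_some u st i : WF u st -> (i <= u)%nat -> exists o, orig st i = Some o.
Proof.
  intros [_ [Hsupp _]] Hi. destruct (orig st i) eqn:E; eauto. apply Hsupp in E. lia.
Qed.

Lemma WF_none u st i : WF u st -> (u < i)%nat -> orig st i = None.
Proof. intros [_ [Hsupp _]] Hi. apply Hsupp; auto. Qed.

Section OneStep.
Variables (u : nat) (st : state) (bs : list bool).
Hypothesis HWF : WF u st.
Hypothesis Hlen : length bs = S (S u).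
Let b i := nth i bs false.

Lemma is_new_in i : (i <= u)%nat -> is_new st b i = false.
Proof.
  intros Hi. destruct i; [reflexivity|]. simpl.
  destruct (WF_some u st (S i) HWF Hi) as [o ->]. reflexivity.
Qed.

Lemma count_new_low n : (n <= S u)%nat -> count_new st b n = 0%nat.
Proof.
  induction n as [|n IH]; intros Hn; [reflexivity|]. simpl.
  rewrite IH, is_new_in by lia. reflexivity.
Qed.

Lemma step_orig_in i : (1 <= i <= u)%nat ->
  orig (step st bs) i = if b i then orig st (i - 1) else orig st i.
Proof.
  intros Hi. destruct i as [|j]; [lia|]. unfold b. simpl.
  destruct (WF_some u st (S j) HWF ltac:(lia)) as [o ->]. rewrite Nat.sub_0_r.
  destruct (nth (S j) bs false); reflexivity.
Qed.

Lemma step_orig_tip ou : orig st u = Some ou ->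
  orig (step st bs) (S u) = Some (if b (S u) then cnt st else ou).
Proof.
  intros E. simpl. rewrite (WF_none u st (S u)) by (auto; lia). rewrite E.
  unfold b. destruct (nth (S u) bs false); [|reflexivity].
  change (fun i => nth i bs false) with b. rewrite count_new_low, is_new_in by lia. f_equal; lia.
Qed.

Lemma step_orig_out i : (S u < i)%nat -> orig (step st bs) i = None.
Proof.
  intros Hi. destruct i as [|j]; [lia|]. simpl. rewrite !(WF_none u st) by (auto; lia).
  reflexivity.
Qed.

Lemma step_cnt : cnt (step st bs) = (cnt st + if b (S u) then 1 else 0)%nat.
Proof.
  change (cnt (step st bs)) with (cnt st + count_new st b (length bs))%nat.
  rewrite Hlen. simpl. rewrite count_new_low, is_new_in by lia. simpl.
  rewrite (WF_none u st (S u)) by (auto; lia).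
  destruct (WF_some u st u HWF (le_n u)) as [o ->]. reflexivity.
Qed.

Lemma step_orig_between i o : (1 <= i <= u)%nat -> orig (step st bs) i = Some o ->
  exists o1 o2, orig st (i - 1) = Some o1 /\ orig st i = Some o2 /\
                (o1 <= o)%nat /\ (o <= o2)%nat.
Proof.
  intros Hi E. destruct HWF as [_ [_ [Hmono _]]]. rewrite step_orig_in in E by auto.
  destruct (WF_some u st (i - 1) HWF ltac:(lia)) as [o1 E1].
  destruct (WF_some u st i HWF ltac:(lia)) as [o2 E2].
  assert (o1 <= o2)%nat by (apply (Hmono (i - 1)%nat i); auto; lia).
  exists o1, o2. destruct (b i); rewrite ?E1, ?E2 in E; inversion E; subst; auto.
Qed.

Lemma WF_step : WF (S u) (step st bs).
Proof.
  destruct HWF as [Hroot [Hsupp [Hmono Hcnt]]].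
  destruct (WF_some u st u HWF (le_n u)) as [ou Eu].
  assert (Hou : (ou < cnt st)%nat) by eauto.
  split; [reflexivity|]. split; [|split].
  - intros i. split; intros H; [|apply step_orig_out; auto].
    destruct (le_lt_dec i (S u)) as [Hi|Hi]; auto. exfalso.
    destruct i as [|i]; [discriminate|].
    destruct (Nat.eq_dec i u) as [->|Hne]; [rewrite (step_orig_tip ou Eu) in H; discriminate|].
    rewrite step_orig_in in H by lia.
    destruct (WF_some u st (S i - 1) HWF ltac:(lia)) as [? E1].
    destruct (WF_some u st (S i) HWF ltac:(lia)) as [? E2]. destruct (b (S i)); congruence.
  - intros i j o1 o2 Hij H1 H2.
    destruct (Nat.eq_dec i 0) as [->|Hi0]; [simpl in H1; inversion H1; lia|].
    destruct (le_lt_dec j u) as [Hj|Hj].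
    + destruct (step_orig_between i o1 ltac:(lia) H1) as [a1 [a2 [_ [E2 [_ L2]]]]].
      destruct (step_orig_between j o2 ltac:(lia) H2) as [c1 [c2 [E3 [_ [L3 _]]]]].
      destruct (Nat.eq_dec i j) as [->|Hne]; [rewrite H1 in H2; inversion H2; lia|].
      assert (a2 <= c1)%nat by (apply (Hmono i (j - 1)%nat); auto; lia). lia.
    + destruct (Nat.eq_dec j (S u)) as [->|Hne]; [|rewrite step_orig_out in H2 by lia; discriminate].
      destruct (Nat.eq_dec i (S u)) as [->|Hne2]; [rewrite H1 in H2; inversion H2; lia|].
      rewrite (step_orig_tip ou Eu) in H2. inversion H2; subst.
      destruct (step_orig_between i o1 ltac:(lia) H1) as [a1 [a2 [_ [E2 [_ L2]]]]].
      assert (a2 <= ou)%nat by (apply (Hmono i u); auto; lia).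
      destruct (b (S u)); lia.
  - intros i o H. rewrite step_cnt.
    destruct (Nat.eq_dec i 0) as [->|Hi0]; [simpl in H; inversion H; subst; lia|].
    destruct (le_lt_dec i u) as [Hi|Hi].
    + destruct (step_orig_between i o ltac:(lia) H) as [a1 [a2 [_ [E2 [_ L2]]]]].
      assert (a2 < cnt st)%nat by eauto. lia.
    + destruct (Nat.eq_dec i (S u)) as [->|Hne]; [|rewrite step_orig_out in H by lia; discriminate].
      rewrite (step_orig_tip ou Eu) in H. inversion H; subst. destruct (b (S u)); lia.
Qed.
End OneStep.

Definition leb_opt (o : option nat) (k : nat) : bool :=
  match o with Some o => (o <=? k)%nat | None => false end.

Fixpoint front (st : state) (k n : nat) : nat :=
  match n with
  | O => O
  | S m => if leb_opt (orig st (S m)) k then S m else front st k m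
  end.

Definition below st k i := leb_opt (orig st i) k = true.

Lemma below_iff st k i : below st k i <-> exists o, orig st i = Some o /\ (o <= k)%nat.
Proof.
  unfold below, leb_opt. destruct (orig st i) as [o|]; split; intros H.
  - exists o; split; auto. apply Nat.leb_le; auto.
  - destruct H as [o' [E H]]. inversion E; subst. apply Nat.leb_le; auto.
  - discriminate.
  - destruct H as [o [E _]]; discriminate.
Qed.

Lemma front_le st k n : (front st k n <= n)%nat.
Proof. induction n; simpl; [lia|]. destruct leb_opt; lia. Qed.

Lemma front_max st k n i : (front st k n < i <= n)%nat -> ~ below st k i.
Proof.
  induction n as [|n IH]; simpl; intros H; [lia|]. unfold below in *.
  destruct (leb_opt (orig st (S n)) k) eqn:E; [lia|].
  destruct (Nat.eq_dec i (S n)) as [->|Hne]; [rewrite E; discriminate|]. apply IH. lia.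
Qed.

Lemma below_root u st k : WF u st -> below st k 0.
Proof. intros [H _]. unfold below. rewrite H. reflexivity. Qed.

Lemma below_down u st k i j : WF u st -> (i <= j)%nat -> below st k j -> below st k i.
Proof.
  intros HWF Hij Hj. apply below_iff in Hj. destruct Hj as [o [E Ho]].
  destruct HWF as [_ [Hsupp [Hmono _]]].
  destruct (orig st i) as [oi|] eqn:Ei.
  - apply below_iff. exists oi; split; auto. pose proof (Hmono i j oi o Hij Ei E). lia.
  - apply Hsupp in Ei. assert (orig st j = None) by (apply Hsupp; lia). congruence.
Qed.

Lemma front_cases st k n : front st k n = 0%nat \/ below st k (front st k n).
Proof. induction n; simpl; auto. unfold below. destruct leb_opt eqn:E; auto. Qed.

Lemma front_below u st k : WF u st -> below st k (front st k u).
Proof.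
  intros HWF. destruct (front_cases st k u) as [H|H]; auto.
  rewrite H. eapply below_root; eauto.
Qed.

Lemma front_char u st k x : WF u st -> (x <= u)%nat -> below st k x ->
  ((x < u)%nat -> ~ below st k (S x)) -> front st k u = x.
Proof.
  intros HWF Hx Px Nx.
  destruct (lt_eq_lt_dec (front st k u) x) as [[Hlt|Heq]|Hgt]; auto.
  - exfalso. apply (front_max st k u x (conj Hlt Hx)); auto.
  - exfalso. pose proof (front_le st k u).
    apply Nx; [lia|]. apply (below_down u st k (S x) (front st k u)); auto.
    apply front_below; auto.
Qed.

Lemma front_frontier u st k : WF u st -> frontier st k (front st k u).
Proof.
  intros HWF. split; [apply below_iff, front_below; auto|].
  intros i o E Ho. destruct (le_lt_dec i (front st k u)) as [H|H]; auto. exfalso.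
  assert (i <= u)%nat.
  { destruct (le_lt_dec i u); auto. rewrite (WF_none u st i) in E by auto. discriminate. }
  apply (front_max st k u i); [lia|]. apply below_iff; eauto.
Qed.

Lemma front_mono_k u st k k' : WF u st -> (k <= k')%nat -> (front st k u <= front st k' u)%nat.
Proof.
  intros HWF Hk. destruct (le_lt_dec (front st k u) (front st k' u)) as [H|H]; auto. exfalso.
  apply (front_max st k' u (front st k u)); [split; auto; apply front_le|].
  pose proof (front_below u st k HWF) as P. apply below_iff in P. apply below_iff.
  destruct P as [o [E Ho]]. exists o; split; auto; lia.
Qed.

Lemma front_newest u st : WF u st -> front st (cnt st - 1) u = u.
Proof.
  intros HWF. apply front_char; auto; [|intros; lia].
  apply below_iff. destruct (WF_some u st u HWF (le_n u)) as [o E]. exists o; split; auto.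
  destruct HWF as [_ [_ [_ Hcnt]]]. pose proof (Hcnt u o E). lia.
Qed.

Section FrontierStep.
Variables (u : nat) (st : state) (bs : list bool) (k : nat).
Hypothesis HWF : WF u st.
Hypothesis Hlen : length bs = S (S u).
Hypothesis Hk : (k < cnt st)%nat.
Let b i := nth i bs false.
Let st' := step st bs.

Lemma WF_st' : WF (S u) st'.
Proof. apply WF_step; auto. Qed.

Lemma below_step_in i : (1 <= i <= u)%nat ->
  below st' k i <-> (if b i then below st k (i - 1) else below st k i).
Proof.
  intros Hi. unfold below, st'. rewrite (step_orig_in u st bs HWF) by auto.
  unfold b. destruct (nth i bs false); tauto.
Qed.

Lemma below_step_tip : below st' k (S u) <-> below st k u /\ b (S u) = false.
Proof.
  destruct (WF_some u st u HWF (le_n u)) as [ou E].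
  unfold below, st'. rewrite (step_orig_tip u st bs HWF Hlen ou E), E. unfold b.
  destruct (nth (S u) bs false); simpl; rewrite !Nat.leb_le; split; intuition (try lia).
Qed.

Lemma front_step_detached : (front st k u < u)%nat ->
  front st' k (S u) = if b (S (front st k u)) then S (front st k u) else front st k u.
Proof.
  set (x := front st k u). intros Hx.
  assert (NP : forall j, (x < j <= u)%nat -> ~ below st k j)
    by (intros; apply (front_max st k u); auto).
  pose proof (front_below u st k HWF) as Px. fold x in Px.
  pose proof WF_st' as HWF'.
  destruct (b (S x)) eqn:Eb; apply front_char; auto; try lia.
  - apply below_step_in; [lia|]. rewrite Eb. replace (S x - 1)%nat with x by lia. auto.
  - intros _. destruct (Nat.eq_dec (S x) u) as [He|Hne].
    + rewrite He. rewrite below_step_tip. intros [H _]. apply (NP u); auto; lia.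
    + rewrite below_step_in by lia. replace (S (S x) - 1)%nat with (S x) by lia.
      destruct (b (S (S x))); apply NP; lia.
  - destruct (Nat.eq_dec x 0) as [->|H0]; [eapply below_root; eauto|].
    apply below_step_in; [lia|].
    destruct (b x); auto. apply (below_down u st k _ x); auto; lia.
  - intros _. rewrite below_step_in by lia. rewrite Eb. apply NP; lia.
Qed.

Lemma front_step_attached : front st k u = u ->
  front st' k (S u) = if b (S u) then u else S u.
Proof.
  intros Hx. pose proof (front_below u st k HWF) as Pu. rewrite Hx in Pu.
  pose proof WF_st' as HWF'.
  destruct (b (S u)) eqn:Eb; apply front_char; auto; try lia.
  - destruct (Nat.eq_dec u 0) as [->|H0]; [eapply below_root; eauto|].
    apply below_step_in; [lia|].
    destruct (b u); auto. apply (below_down u st k _ u); auto; lia.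
  - intros _. rewrite below_step_tip. intros [_ H]. congruence.
  - apply below_step_tip. auto.
Qed.
End FrontierStep.

Lemma wprod_nonneg (g : nat -> bool -> R) bs i :
  (forall m b, 0 <= g m b) -> 0 <= wprod g bs i.
Proof. revert i; induction bs; intros i H; simpl; [lra|]. apply Rmult_le_pos; auto. Qed.

Definition ind (P : Prop) : R := if excluded_middle_informative P then 1 else 0.

Lemma ind_ge0 P : 0 <= ind P.
Proof. unfold ind; destruct excluded_middle_informative; lra. Qed.

Lemma ind_le1 P : ind P <= 1.
Proof. unfold ind; destruct excluded_middle_informative; lra. Qed.

Lemma ind_outside_le_exp y a r lam lo hi : 0 < lam -> lo <= a - r -> a + r <= hi ->
  ind (~ (lo <= y <= hi)) <=
  exp (- (lam * (a + r))) * exp (lam * y) + exp (lam * (a - r)) * exp (- lam * y).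
Proof.
  intros Hlam Hlo Hhi. rewrite <- !exp_plus.
  pose proof (exp_pos (- (lam * (a + r)) + lam * y)).
  pose proof (exp_pos (lam * (a - r) + - lam * y)).
  unfold ind. destruct excluded_middle_informative as [Hout|Hin]; [|lra].
  rewrite <- exp_0. destruct (Rle_dec lo y) as [Hl|Hl].
  - assert (hi < y) by (destruct (Rle_dec y hi); [exfalso; apply Hout; lra | lra]).
    assert (Hpos : 0 <= - (lam * (a + r)) + lam * y) by nra.
    pose proof (exp_le_mono _ _ Hpos). lra.
  - assert (Hpos : 0 <= lam * (a - r) + - lam * y) by nra.
    pose proof (exp_le_mono _ _ Hpos). lra.
Qed.

(* Expectations for the process.  [Ex st u n g] is the expected value of [g]
   at time [u + n] when the process is in state [st] at time [u]; it is built
   from the one-step expectation [step_exp], and [prob] is [Ex] from [init]. *)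
Section Expectation.
Variables alpha beta : R.

Definition coin_law (st : state) (i : nat) (b : bool) : R :=
  if b then coin_p alpha beta st i else 1 - coin_p alpha beta st i.

Lemma coin_law_total st m : coin_law st m true + coin_law st m false = 1.
Proof. unfold coin_law; lra. Qed.

Definition step_exp (u : nat) (st : state) (g : state -> R) : R :=
  sumL (bools (S (S u))) (fun bs => coin_weight alpha beta st bs * g (step st bs)).

Fixpoint Ex (st : state) (u n : nat) (g : state -> R) : R :=
  match n with
  | O => g st
  | S m => Ex st u m (fun s => step_exp (u + m) s g)
  end.

Lemma prob_Ex t E : prob alpha beta t E = Ex init 0 t (fun s => ind (E s)).
Proof.
  assert (Hdist : forall g, sumL (Defs.dist alpha beta t) (fun p => fst p * g (snd p)) = Ex init 0 t g).
  { induction t as [|t IH]; intros g.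
    - unfold sumL; simpl. lra.
    - simpl. rewrite sumL_flat_map, <- IH. apply sumL_ext_in. intros p _.
      rewrite sumL_map. simpl. unfold step_exp. rewrite <- sumL_scal.
      apply sumL_ext_in. intros. lra. }
  rewrite <- Hdist. unfold prob, sumL. f_equal. apply map_ext. intros [w s]. simpl.
  unfold ind. destruct excluded_middle_informative; lra.
Qed.

Lemma step_exp_const u st c : step_exp u st (fun _ => c) = c.
Proof.
  unfold step_exp. rewrite (sumL_ext_in _ _ (fun bs => c * wprod (coin_law st) bs 0)).
  - rewrite sumL_scal, wprod_total; [lra|]. apply coin_law_total.
  - intros. unfold coin_weight, coin_law. lra.
Qed.

Lemma step_exp_lin u st a b g h :
  step_exp u st (fun s => a * g s + b * h s) = a * step_exp u st g + b * step_exp u st h.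
Proof. unfold step_exp. rewrite <- !sumL_scal, <- sumL_plus. apply sumL_ext_in; intros; lra. Qed.

Lemma Ex_lin st u n a b g h :
  Ex st u n (fun s => a * g s + b * h s) = a * Ex st u n g + b * Ex st u n h.
Proof.
  revert g h; induction n as [|n IH]; intros g h; simpl; [reflexivity|].
  rewrite <- IH. f_equal. apply functional_extensionality. intros s. apply step_exp_lin.
Qed.

Lemma Ex_scal st u n a g : Ex st u n (fun s => a * g s) = a * Ex st u n g.
Proof.
  transitivity (Ex st u n (fun s => a * g s + 0 * g s)).
  - f_equal. apply functional_extensionality; intros; lra.
  - rewrite Ex_lin. lra.
Qed.

Lemma Ex_plus st u n g h : Ex st u n (fun s => g s + h s) = Ex st u n g + Ex st u n h.
Proof.
  transitivity (Ex st u n (fun s => 1 * g s + 1 * h s)).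
  - f_equal. apply functional_extensionality; intros; lra.
  - rewrite Ex_lin. lra.
Qed.

Lemma Ex_const st u n c : Ex st u n (fun _ => c) = c.
Proof.
  induction n as [|n IH]; simpl; [reflexivity|].
  rewrite (functional_extensionality (fun s => step_exp (u + n) s (fun _ => c)) (fun _ => c));
    auto using step_exp_const.
Qed.

Lemma Ex_sum st u n (g : nat -> state -> R) l :
  Ex st u n (fun s => sum_f_R0 (fun i => g i s) l) = sum_f_R0 (fun i => Ex st u n (g i)) l.
Proof.
  induction l as [|l IH]; simpl; [reflexivity|].
  rewrite <- IH, <- Ex_plus. reflexivity.
Qed.

Lemma Ex_comp st u m n g : Ex st u (m + n) g = Ex st u m (fun s => Ex s (u + m) n g).
Proof.
  revert g; induction n as [|n IH]; intros g.
  - rewrite Nat.add_0_r. reflexivity.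
  - rewrite Nat.add_succ_r. simpl. rewrite IH, Nat.add_assoc. reflexivity.
Qed.

Lemma Ex_ind_compl t (P : state -> Prop) :
  Ex init 0 t (fun s => ind (P s)) = 1 - Ex init 0 t (fun s => ind (~ P s)).
Proof.
  assert (H : Ex init 0 t (fun s => ind (P s) + ind (~ P s)) = 1).
  { rewrite (functional_extensionality (fun s => ind (P s) + ind (~ P s)) (fun _ => 1)).
    - apply Ex_const.
    - intros s. unfold ind. do 2 destruct excluded_middle_informative; try lra; tauto. }
  rewrite Ex_plus in H. lra.
Qed.

(* Monotonicity needs the coin probabilities to lie in [0, 1]. *)
Hypothesis Halpha : 0 <= alpha <= 1.
Hypothesis Hbeta : 0 <= beta <= 1.

Lemma coin_p_bounds st i : 0 <= coin_p alpha beta st i <= 1.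
Proof. unfold coin_p. destruct i; [lra|]. destruct (orig st (S i)), (orig st i); lra. Qed.

Lemma coin_weight_nonneg st bs : 0 <= coin_weight alpha beta st bs.
Proof.
  apply wprod_nonneg. intros m b. pose proof (coin_p_bounds st m). destruct b; lra.
Qed.

Definition Stable (P : nat -> state -> Prop) :=
  forall u s bs, P u s -> In bs (bools (S (S u))) -> P (S u) (step s bs).

Lemma Ex_mono P st u n g h : Stable P -> P u st ->
  (forall s, P (u + n)%nat s -> g s <= h s) -> Ex st u n g <= Ex st u n h.
Proof.
  intros HP; revert g h; induction n as [|n IH]; intros g h Hst H; simpl.
  - apply H. rewrite Nat.add_0_r. auto.
  - apply IH; auto. intros s Hs. unfold step_exp. apply sumL_le. intros bs Hbs.
    apply Rmult_le_compat_l; [apply coin_weight_nonneg|].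
    apply H. rewrite Nat.add_succ_r. apply HP; auto.
Qed.

Lemma Ex_mono_all st u n g h : (forall s, g s <= h s) -> Ex st u n g <= Ex st u n h.
Proof. intros H. apply (Ex_mono (fun _ _ => True)); auto. intros ? ? ? ? ?; auto. Qed.

Lemma prob_nonneg t E : 0 <= prob alpha beta t E.
Proof.
  rewrite prob_Ex, <- (Ex_const init 0 t 0). apply Ex_mono_all. intros; apply ind_ge0.
Qed.

Lemma Stable_WF : Stable WF.
Proof. intros u s bs H Hbs. apply WF_step; auto. apply bools_length; auto. Qed.


Lemma step_exp_detached u st k (phi : nat -> R) : WF u st -> (k < cnt st)%nat ->
  (front st k u < u)%nat ->
  step_exp u st (fun s => phi (front s k (S u))) =
  beta * phi (S (front st k u)) + (1 - beta) * phi (front st k u).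
Proof.
  intros HWF Hk Hx. set (x := front st k u) in *. unfold step_exp.
  rewrite (sumL_ext_in _ _ (fun bs => wprod (coin_law st) bs 0 *
           (fun b : bool => phi (if b then S x else x)) (nth (S x) bs false))).
  - rewrite (wprod_marginal _ (coin_law_total st) _ 0 (S x)
                               (fun b : bool => phi (if b then S x else x))).
    replace (S x <? S (S u))%nat with true by (symmetry; apply Nat.ltb_lt; lia).
    simpl. unfold coin_law, coin_p. destruct (WF_some u st (S x) HWF ltac:(lia)) as [o ->].
    lra.
  - intros bs Hbs. apply bools_length in Hbs.
    unfold x. rewrite (front_step_detached u st bs k HWF Hbs Hk Hx). reflexivity.
Qed.

Lemma step_exp_attached u st k (phi : nat -> R) : WF u st -> (k < cnt st)%nat ->
  front st k u = u ->
  step_exp u st (fun s => phi (front s k (S u))) = alpha * phi u + (1 - alpha) * phi (S u).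
Proof.
  intros HWF Hk Hx. unfold step_exp.
  rewrite (sumL_ext_in _ _ (fun bs => wprod (coin_law st) bs 0 *
           (fun b : bool => phi (if b then u else S u)) (nth (S u) bs false))).
  - rewrite (wprod_marginal _ (coin_law_total st) _ 0 (S u)
                               (fun b : bool => phi (if b then u else S u))).
    replace (S u <? S (S u))%nat with true by (symmetry; apply Nat.ltb_lt; lia).
    simpl. unfold coin_law, coin_p. rewrite (WF_none u st (S u)) by (auto; lia).
    destruct (WF_some u st u HWF (le_n u)) as [o ->]. lra.
  - intros bs Hbs. apply bools_length in Hbs.
    rewrite (front_step_attached u st bs k HWF Hbs Hk Hx). reflexivity.
Qed.

Lemma front_step_bounds u st bs k : WF u st -> In bs (bools (S (S u))) -> (k < cnt st)%nat ->
  (front st k u <= front (step st bs) k (S u) <= S (front st k u))%nat /\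
  ((front st k u < u)%nat -> (front (step st bs) k (S u) < S u)%nat).
Proof.
  intros HWF Hbs Hk. apply bools_length in Hbs. pose proof (front_le st k u).
  destruct (Nat.eq_dec (front st k u) u) as [He|Hne].
  - rewrite (front_step_attached u st bs k HWF Hbs Hk He), He.
    destruct (nth (S u) bs false); split; lia.
  - rewrite (front_step_detached u st bs k HWF Hbs Hk) by lia.
    destruct (nth (S (front st k u)) bs false); split; lia.
Qed.

Lemma cnt_mono u st bs : WF u st -> In bs (bools (S (S u))) -> (cnt st <= cnt (step st bs))%nat.
Proof. intros HWF Hbs. apply bools_length in Hbs. rewrite (step_cnt u st bs HWF Hbs). lia. Qed.

Definition Used k (u : nat) (s : state) := WF u s /\ (k < cnt s)%nat.

Lemma Stable_Used k : Stable (Used k).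
Proof.
  intros u s bs [HWF Hk] Hbs. split; [apply Stable_WF; auto|].
  pose proof (cnt_mono u s bs HWF Hbs). lia.
Qed.

Lemma attached_decay k st u m : WF u st -> (k < cnt st)%nat ->
  Ex st u m (fun s => ind (front s k (u + m) = (u + m)%nat)) <= (1 - alpha) ^ m.
Proof.
  intros HWF Hk. induction m as [|m IH].
  - apply ind_le1.
  - simpl Ex. rewrite Nat.add_succ_r.
    apply Rle_trans with (Ex st u m (fun s => (1 - alpha) * ind (front s k (u + m) = (u + m)%nat))).
    + apply (Ex_mono (Used k)); [apply Stable_Used | split; auto|].
      intros s [HWFs Hks]. apply Req_le. pose proof (front_le s k (u + m)).
      destruct (Nat.eq_dec (front s k (u + m)) (u + m)) as [He|Hne].
      * rewrite (step_exp_attached _ _ k (fun y => ind (y = S (u + m))) HWFs Hks He).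
        unfold ind. rewrite He. do 3 destruct excluded_middle_informative; try lia; lra.
      * rewrite (step_exp_detached _ _ k (fun y => ind (y = S (u + m))) HWFs Hks ltac:(lia)).
        unfold ind. do 3 destruct excluded_middle_informative; try lia; lra.
    + rewrite Ex_scal. simpl. apply Rmult_le_compat_l; [lra | auto].
Qed.

Definition Detached k (u : nat) (s : state) := WF u s /\ (k < cnt s)%nat /\ (front s k u < u)%nat.

Lemma Stable_Detached k : Stable (Detached k).
Proof.
  intros u s bs [HWF [Hk Hx]] Hbs. split; [apply Stable_WF; auto|].
  pose proof (cnt_mono u s bs HWF Hbs). split; [lia|].
  apply (front_step_bounds u s bs k HWF Hbs Hk). auto.
Qed.

(* A detached frontier performs a walk with Bernoulli(beta) increments; its
   moment generating function after [n] steps. *)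
Lemma detached_mgf k st u n lam : Detached k u st -> -1/2 <= lam <= 1/2 ->
  Ex st u n (fun s => exp (lam * INR (front s k (u + n)))) <=
  exp (lam * INR (front st k u)) * exp (INR n * (beta * lam + 2 * lam ^ 2)).
Proof.
  intros HP Hlam. set (q := beta * exp lam + 1 - beta).
  assert (Hq : 0 <= q) by (unfold q; pose proof (exp_pos lam); nra).
  apply Rle_trans with (exp (lam * INR (front st k u)) * q ^ n).
  2: { apply Rmult_le_compat_l; [left; apply exp_pos|]. rewrite <- exp_pow.
       apply pow_incr. split; auto. apply bernoulli_mgf_bound; lra. }
  induction n as [|n IH].
  - simpl. rewrite Nat.add_0_r. lra.
  - simpl Ex. rewrite Nat.add_succ_r.
    apply Rle_trans with (Ex st u n (fun s => q * exp (lam * INR (front s k (u + n))))).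
    + apply (Ex_mono (Detached k)); [apply Stable_Detached | auto|].
      intros s [HWFs [Hks Hxs]]. apply Req_le.
      rewrite (step_exp_detached _ _ k (fun y => exp (lam * INR y)) HWFs Hks Hxs).
      rewrite S_INR, Rmult_plus_distr_l, Rmult_1_r, exp_plus. unfold q. lra.
    + rewrite Ex_scal. simpl pow.
      apply Rle_trans with (q * (exp (lam * INR (front st k u)) * q ^ n));
        [apply Rmult_le_compat_l; auto | right; ring].
Qed.

Lemma detached_tail k st v n r lo hi : Detached k v st -> (0 < n)%nat -> 0 < r <= 2 * INR n ->
  lo <= INR (front st k v) + beta * INR n - r ->
  INR (front st k v) + beta * INR n + r <= hi ->
  Ex st v n (fun s => ind (~ (lo <= INR (front s k (v + n)) <= hi)))
    <= 2 * exp (- (r ^ 2 / (8 * INR n))).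
Proof.
  intros HP Hn Hr Hlo Hhi.
  assert (HnR : 0 < INR n) by (apply lt_0_INR; auto).
  set (x := INR (front st k v)) in *. set (a := x + beta * INR n).
  set (lam := r / (4 * INR n)).
  assert (Hlam : 0 < lam <= 1/2).
  { unfold lam. split; [apply Rdiv_lt_0_compat; lra|].
    apply Rmult_le_reg_r with (4 * INR n); [lra|].
    unfold Rdiv. rewrite Rmult_assoc, Rinv_l by lra. lra. }
  eapply Rle_trans.
  { apply Ex_mono_all. intros s. apply (ind_outside_le_exp _ a r lam lo hi); unfold a; lra. }
  rewrite Ex_plus, !Ex_scal.
  pose proof (detached_mgf k st v n lam HP ltac:(lra)) as Wup.
  pose proof (detached_mgf k st v n (- lam) HP ltac:(lra)) as Wdown. fold x in Wup, Wdown.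
  assert (Eup : exp (- (lam * (a + r))) * (exp (lam * x) * exp (INR n * (beta * lam + 2 * lam ^ 2)))
                = exp (- (r ^ 2 / (8 * INR n)))).
  { rewrite <- !exp_plus. f_equal. unfold a, lam. field. lra. }
  assert (Edown : exp (lam * (a - r)) *
                  (exp (- lam * x) * exp (INR n * (beta * - lam + 2 * (- lam) ^ 2)))
                  = exp (- (r ^ 2 / (8 * INR n)))).
  { rewrite <- !exp_plus. f_equal. unfold a, lam. field. lra. }
  pose proof (exp_pos (- (lam * (a + r)))). pose proof (exp_pos (lam * (a - r))).
  assert (exp (- (lam * (a + r))) * Ex st v n (fun s => exp (lam * INR (front s k (v + n))))
          <= exp (- (r ^ 2 / (8 * INR n)))) by (rewrite <- Eup; apply Rmult_le_compat_l; lra).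
  assert (exp (lam * (a - r)) * Ex st v n (fun s => exp (- lam * INR (front s k (v + n))))
          <= exp (- (r ^ 2 / (8 * INR n)))) by (rewrite <- Edown; apply Rmult_le_compat_l; lra).
  lra.
Qed.

Definition FrontAbove k tau (u : nat) (s : state) :=
  WF u s /\ (k < cnt s)%nat /\ (tau <= front s k u)%nat.

(* A frontier never moves back. *)
Lemma Stable_FrontAbove k tau : Stable (FrontAbove k tau).
Proof.
  intros u s bs [HWF [Hk Hx]] Hbs. split; [apply Stable_WF; auto|].
  pose proof (cnt_mono u s bs HWF Hbs). split; [lia|].
  pose proof (front_step_bounds u s bs k HWF Hbs Hk). lia.
Qed.

Lemma cnt_pos u s : WF u s -> (1 <= cnt s)%nat.
Proof. intros [Hroot [_ [_ Hcnt]]]. pose proof (Hcnt 0%nat 0%nat Hroot). lia. Qed.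

(* The newest origin value at time [tau] is, [delta + n] steps later, at
   distance more than [r] from [tau + beta n] only if it stayed attached for
   [delta] steps or its subsequent walk deviated by more than [r]. *)
Lemma newest_front_window s tau delta n lo hi r : WF tau s ->
  (0 < n)%nat -> 0 < r <= 2 * INR n ->
  lo <= INR tau + beta * INR n - r -> INR tau + INR delta + beta * INR n + r <= hi ->
  Ex s tau (delta + n)
     (fun s' => ind (~ (lo <= INR (front s' (cnt s - 1) (tau + (delta + n))) <= hi)))
  <= (1 - alpha) ^ delta + 2 * exp (- (r ^ 2 / (8 * INR n))).
Proof.
  intros HWF Hn Hr Hlo Hhi. set (k := (cnt s - 1)%nat). set (D := 2 * exp (- (r ^ 2 / (8 * INR n)))).
  pose proof (cnt_pos _ _ HWF).
  rewrite Nat.add_assoc, Ex_comp.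
  apply Rle_trans with (Ex s tau delta
           (fun s' => ind (front s' k (tau + delta) = (tau + delta)%nat) + D)).
  - apply (Ex_mono (FrontAbove k tau)); [apply Stable_FrontAbove | |].
    + split; auto. split; [unfold k; lia|]. unfold k. rewrite (front_newest _ _ HWF). lia.
    + intros s' [HWF' [Hk' Hx']]. pose proof (front_le s' k (tau + delta)).
      assert (0 <= D) by (unfold D; pose proof (exp_pos (- (r ^ 2 / (8 * INR n)))); lra).
      destruct (Nat.eq_dec (front s' k (tau + delta)) (tau + delta)) as [He|Hne].
      * apply Rle_trans with 1.
        { rewrite <- (Ex_const s' (tau + delta) n 1). apply Ex_mono_all. intros; apply ind_le1. }
        unfold ind at 1. destruct excluded_middle_informative; [lra | contradiction].
      * pose proof (ind_ge0 (front s' k (tau + delta) = (tau + delta)%nat)).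
        assert (INR tau <= INR (front s' k (tau + delta)) <= INR tau + INR delta).
        { rewrite <- plus_INR. split; apply le_INR; lia. }
        apply Rle_trans with D; [|lra].
        apply detached_tail; auto; [split; auto; split; auto; lia | lra | lra].
  - rewrite Ex_plus, Ex_const. apply Rplus_le_compat_r. apply attached_decay; auto. unfold k; lia.
Qed.

Lemma window_bound t tau delta n lo hi r : t = (tau + (delta + n))%nat ->
  (0 < n)%nat -> 0 < r <= 2 * INR n ->
  lo <= INR tau + beta * INR n - r -> INR tau + INR delta + beta * INR n + r <= hi ->
  Ex init 0 t (fun s => ind (~ exists k, lo <= INR (front s k t) <= hi))
  <= (1 - alpha) ^ delta + 2 * exp (- (r ^ 2 / (8 * INR n))).
Proof.
  intros -> Hn Hr Hlo Hhi. rewrite Ex_comp.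
  rewrite <- (Ex_const init 0 tau ((1 - alpha) ^ delta + 2 * exp (- (r ^ 2 / (8 * INR n))))).
  apply (Ex_mono WF); [apply Stable_WF | apply WF_init |]. intros s HWF.
  eapply Rle_trans; [|apply (newest_front_window s tau delta n lo hi r); auto].
  apply Ex_mono_all. intros s'. unfold ind.
  do 2 destruct excluded_middle_informative; try lra; exfalso; firstorder.
Qed.
End Expectation.

(* Deterministic step: if for each i <= l some frontier lies in the i-th window
   (center [beta t + Cb S i], half-width [K S], with S = t^c sqrt t and
   windows separated since 2K < Cb), the good event holds, with the chosen
   frontiers automatically distinct and their indices increasing. *)
Lemma good_event_of_windows beta Cb K L c t st l : WF t st ->
  0 < Rpower (INR t) c * sqrt (INR t) -> 0 < K -> 2 * K < Cb ->
  L * Rpower (INR t) (/2 - c) <= INR l ->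
  (forall i, (i <= l)%nat -> exists k,
     Rabs (INR (front st k t) - beta * INR t - Cb * Rpower (INR t) c * sqrt (INR t) * INR i)
       <= K * Rpower (INR t) c * sqrt (INR t)) ->
  good_event beta Cb K L c t st.
Proof.
  intros HWF HS HK HCK HL HW.
  set (InWindow := fun i k => Rabs (INR (front st k t) - beta * INR t
                    - Cb * Rpower (INR t) c * sqrt (INR t) * INR i) <= K * Rpower (INR t) c * sqrt (INR t)).
  set (Sg := Rpower (INR t) c * sqrt (INR t)) in *.
  set (ks := fun i => epsilon (inhabits 0%nat) (InWindow i)).
  assert (Hks : forall i, (i <= l)%nat -> InWindow i (ks i))
    by (intros i Hi; apply epsilon_spec, HW; auto).
  assert (Hbounds : forall i, (i <= l)%nat ->
     beta * INR t + Cb * Sg * INR i - K * Sg <= INR (front st (ks i) t)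
     <= beta * INR t + Cb * Sg * INR i + K * Sg).
  { intros i Hi. pose proof (Hks i Hi) as H. unfold InWindow in H.
    revert H. unfold Sg. unfold Rabs. destruct Rcase_abs; lra. }
  assert (Hlt : forall i j, (i < j)%nat -> (j <= l)%nat ->
                (front st (ks i) t < front st (ks j) t)%nat).
  { intros i j Hij Hj. apply INR_lt.
    pose proof (Hbounds i ltac:(lia)). pose proof (Hbounds j Hj).
    assert (INR i + 1 <= INR j) by (rewrite <- S_INR; apply le_INR; lia).
    assert (Cb * Sg * INR i + Cb * Sg <= Cb * Sg * INR j) by (assert (0 < Cb * Sg) by nra; nra).
    assert (2 * K * Sg < Cb * Sg) by (apply Rmult_lt_compat_r; lra). lra. }
  exists l, ks, (fun i => front st (ks i) t). split; [auto|]. split; [|split; [|split]].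
  - intros i Hi. destruct (le_lt_dec (ks (S i)) (ks i)) as [H|H]; auto. exfalso.
    pose proof (front_mono_k t st _ _ HWF H). pose proof (Hlt i (S i) ltac:(lia) ltac:(lia)). lia.
  - intros i Hi. apply (front_frontier t). auto.
  - intros i j Hi Hj Hij. destruct (lt_eq_lt_dec i j) as [[H|H]|H]; [|contradiction|].
    + pose proof (Hlt i j H Hj). lia.
    + pose proof (Hlt j i H Hi). lia.
  - intros i Hi. apply (Hks i Hi).
Qed.

(* The three scales of the theorem at time tR: the window spacing
   Sg = tR^c sqrt tR, the exponent T = tR^(2c) and the number of windows
   U = tR^(1/2 - c); they satisfy Sg U = tR and T U = Sg. *)
Section Scales.
Variables (tR c : R).
Hypothesis Ht : 1 <= tR.
Hypothesis Hc : 0 < c < /2.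
Let Sg := Rpower tR c * sqrt tR.
Let T := Rpower tR (2 * c).
Let U := Rpower tR (/2 - c).

Lemma Sg_Rpower : Sg = Rpower tR (c + /2).
Proof. unfold Sg. rewrite <- Rpower_sqrt, Rpower_plus by lra. reflexivity. Qed.

Lemma Sg_times_U : Sg * U = tR.
Proof.
  rewrite Sg_Rpower. unfold U. rewrite <- Rpower_plus.
  replace (c + /2 + (/2 - c)) with 1 by field. apply Rpower_1; lra.
Qed.

Lemma T_times_U : T * U = Sg.
Proof. rewrite Sg_Rpower. unfold T, U. rewrite <- Rpower_plus. f_equal. field. Qed.

Lemma T_ge1 : 1 <= T.
Proof. apply Rpower_ge1; lra. Qed.

Lemma U_ge1 : 1 <= U.
Proof. apply Rpower_ge1; lra. Qed.

(* Once U is large, the detachment delay 2T/alpha is negligible against Sg. *)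
Lemma delay_condition alpha : 0 < alpha -> 2 / alpha + 2 <= U -> 2 * T / alpha + 2 <= Sg.
Proof.
  intros Ha HU. pose proof T_ge1. rewrite <- T_times_U.
  replace (2 * T / alpha) with (T * (2 / alpha)) by (field; lra). nra.
Qed.

(* Once U is large, all windows fit in [0, tR] with room for the walk. *)
Lemma time_condition alpha beta : 0 < alpha -> beta < 1 ->
  2 * (11 / (1 - beta) + 2 + 2 / alpha) + 4 <= U ->
  tR / 4 + 11 * Sg / (1 - beta) + 2 * T / alpha + 2 + 2 * Sg <= tR.
Proof.
  intros Ha Hb HU. set (A := 11 / (1 - beta) + 2 + 2 / alpha) in HU.
  pose proof T_ge1. pose proof U_ge1.
  assert (HTS : T <= Sg) by (rewrite <- T_times_U; nra).
  assert (HSg1 : 1 <= Sg) by lra.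
  assert (2 * T / alpha <= 2 / alpha * Sg).
  { replace (2 * T / alpha) with (2 / alpha * T) by (field; lra).
    apply Rmult_le_compat_l; [|lra]. apply Rlt_le, Rdiv_lt_0_compat; lra. }
  assert (11 * Sg / (1 - beta) + 2 * T / alpha + 2 * Sg + 2 <= (A + 2) * Sg).
  { unfold A. replace (11 * Sg / (1 - beta)) with (11 / (1 - beta) * Sg) by (field; lra). nra. }
  assert ((A + 2) * Sg <= 3 / 4 * tR) by (rewrite <- Sg_times_U; nra).
  lra.
Qed.

(* Once U is large, the union bound over the U + 2 windows costs less than
   a factor exp T; [N] is any integer with 2 c N >= 1. *)
Lemma windows_condition (N : nat) : (1 <= N)%nat -> 1 <= 2 * c * INR N ->
  3 * INR N ^ N + 2 <= U -> 3 * (U + 2) <= exp T.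
Proof.
  intros HN H2cN HU. pose proof T_ge1. pose proof U_ge1.
  assert (HNR : 1 <= INR N) by (apply (le_INR 1); auto).
  set (NN := INR N ^ N) in HU. assert (HNN : 1 <= NN) by (apply pow_R1_Rle; lra).
  assert (HtT : tR <= T ^ N).
  { rewrite <- Rpower_pow by lra. unfold T. rewrite Rpower_mult.
    rewrite <- (Rpower_1 tR) at 1 by lra. apply Rle_Rpower; lra. }
  assert (HUU : U * U <= tR) by (rewrite <- Sg_times_U, <- T_times_U; nra).
  pose proof (exp_ge_pow T N ltac:(lra) HN) as HE.
  unfold Rdiv in HE. rewrite Rpow_mult_distr, pow_inv in HE. fold NN in HE.
  assert (3 * (U + 2) * NN <= U * U) by nra.
  assert (3 * (U + 2) <= T ^ N * / NN).
  { apply Rmult_le_reg_r with NN; [lra|]. field_simplify; lra. }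
  lra.
Qed.
End Scales.

Lemma power_eventually_large e M : 0 < e -> 1 <= M ->
  exists N0 : nat, forall t : nat, (N0 <= t)%nat -> 1 <= INR t /\ M <= Rpower (INR t) e.
Proof.
  intros He HM. destruct (nat_above (Rmax 1 (Rpower M (/ e)))) as [N0 HN0].
  exists N0. intros t Ht.
  assert (Hbig : Rmax 1 (Rpower M (/ e)) <= INR t) by (eapply Rle_trans; [apply HN0 | apply le_INR; auto]).
  pose proof (Rmax_l 1 (Rpower M (/ e))). pose proof (Rmax_r 1 (Rpower M (/ e))).
  split; [lra|].
  replace M with (Rpower (Rpower M (/ e)) e) at 1.
  - apply Rle_Rpower_l; [lra | split; [apply exp_pos | lra]].
  - rewrite Rpower_mult, Rinv_l, Rpower_1; lra.
Qed.

Lemma scale_conditions_eventually alpha beta c : 0 < alpha < 1 -> 0 < beta < 1 -> 0 < c < /2 ->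
  exists N0 : nat, forall t : nat, (N0 <= t)%nat ->
    let tR := INR t in
    let Sg := Rpower tR c * sqrt tR in
    let T := Rpower tR (2 * c) in
    let U := Rpower tR (/2 - c) in
    1 <= tR /\
    2 * T / alpha + 2 <= Sg /\
    tR / 4 + 11 * Sg / (1 - beta) + 2 * T / alpha + 2 + 2 * Sg <= tR /\
    3 * (U + 2) <= exp T.
Proof.
  intros Ha Hb Hc.
  destruct (nat_above (/ (2 * c))) as [N1 HN1]. set (N := S N1).
  assert (HN2c : 1 <= 2 * c * INR N).
  { unfold N. rewrite S_INR. assert (/ (2 * c) * (2 * c) = 1) by (field; lra). nra. }
  assert (HNN : 1 <= INR N ^ N) by (apply pow_R1_Rle; unfold N; rewrite S_INR; pose proof (pos_INR N1); lra).
  assert (Ha2 : 0 < 2 / alpha) by (apply Rdiv_lt_0_compat; lra).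
  assert (Hb11 : 0 < 11 / (1 - beta)) by (apply Rdiv_lt_0_compat; lra).
  set (M := 2 * (11 / (1 - beta) + 2 + 2 / alpha) + 4 + (3 * INR N ^ N + 2)).
  destruct (power_eventually_large (/2 - c) M ltac:(lra) ltac:(unfold M; lra)) as [N0 HN0].
  exists N0. intros t Ht tR Sg T U. subst tR Sg T U.
  destruct (HN0 t Ht) as [Ht1 HU]. unfold M in HU.
  split; [auto|]. split; [|split].
  - apply delay_condition; lra.
  - apply time_condition; lra.
  - apply (windows_condition _ c Ht1 Hc N); [unfold N; lia | auto | lra].
Qed.

(* The main estimate at a fixed time t satisfying the scale conditions, with
   Cb = 11, K = 5 and L = (1 - beta)/44: the i-th window is centered at
   beta t + 11 Sg i and is hit by the frontier of the newest origin value at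
   a time tau_i with (1 - beta) tau_i ~ 11 Sg i. *)
Section MainEstimate.
Variables (alpha beta c : R) (t : nat).
Hypothesis Halpha : 0 < alpha < 1.
Hypothesis Hbeta : 0 < beta < 1.
Hypothesis Hc : 0 < c < /2.
Let tR := INR t.
Let Sg := Rpower tR c * sqrt tR.
Let T := Rpower tR (2 * c).
Let U := Rpower tR (/2 - c).
Hypothesis Ht1 : 1 <= tR.
Hypothesis Hdelay : 2 * T / alpha + 2 <= Sg.
Hypothesis Htime : tR / 4 + 11 * Sg / (1 - beta) + 2 * T / alpha + 2 + 2 * Sg <= tR.
Hypothesis Hwindows : 3 * (U + 2) <= exp T.

Let L := (1 - beta) / 44.
Let lo (i : nat) := beta * tR + 11 * Sg * INR i - 5 * Sg.
Let hi (i : nat) := beta * tR + 11 * Sg * INR i + 5 * Sg.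
Let Miss (i : nat) (s : state) := ~ exists k, lo i <= INR (front s k t) <= hi i.

(* Timing of the i-th window: the newest origin value at time [tau] gets
   [delta] >= 2T/alpha steps to detach and then walks for [n] steps, ending
   in the i-th window with margin r = 4 Sg on both sides. *)
Lemma window_schedule i : INR i <= L * U + 1 ->
  exists tau delta n : nat, t = (tau + (delta + n))%nat /\ (0 < n)%nat /\
    4 * Sg <= 2 * INR n /\ INR n <= tR /\ 2 * T <= alpha * INR delta /\
    lo i <= INR tau + beta * INR n - 4 * Sg /\
    INR tau + INR delta + beta * INR n + 4 * Sg <= hi i.
Proof.
  intros Hi. pose proof (Sg_times_U tR c Ht1) as HSU. fold Sg U in HSU.
  pose proof (T_ge1 tR c Ht1 Hc). pose proof (U_ge1 tR c Ht1 Hc). fold T U in H, H0.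
  assert (HiR : 0 <= INR i) by apply pos_INR.
  assert (HX : 0 <= 11 * Sg * INR i / (1 - beta))
    by (apply Rmult_le_pos; [nra | apply Rlt_le, Rinv_0_lt_compat; lra]).
  destruct (nat_floor _ HX) as [tau [Hlow Hup]].
  assert (Htau : (1 - beta) * INR tau <= 11 * Sg * INR i < (1 - beta) * INR tau + (1 - beta)).
  { replace (11 * Sg * INR i) with ((1 - beta) * (11 * Sg * INR i / (1 - beta))) by (field; lra).
    split; [apply Rmult_le_compat_l; lra|].
    replace ((1 - beta) * INR tau + (1 - beta)) with ((1 - beta) * (INR tau + 1)) by ring.
    apply Rmult_lt_compat_l; lra. }
  assert (HTa : 0 <= 2 * T / alpha)
    by (apply Rmult_le_pos; [lra | apply Rlt_le, Rinv_0_lt_compat; lra]).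
  destruct (nat_ceil _ HTa) as [delta Hd].
  assert (Htau_b : INR tau <= tR / 4 + 11 * Sg / (1 - beta)).
  { assert (11 * Sg * INR i <= 11 * Sg * (L * U + 1)) by (apply Rmult_le_compat_l; lra).
    assert (11 * Sg * (L * U + 1) = (1 - beta) * (tR / 4 + 11 * Sg / (1 - beta)))
      by (rewrite <- HSU; unfold L; field; lra).
    apply Rmult_le_reg_l with (1 - beta); lra. }
  assert (Hle : (tau + delta <= t)%nat) by (apply INR_le; rewrite plus_INR; fold tR; lra).
  exists tau, delta, (t - (tau + delta))%nat.
  assert (Hn : INR (t - (tau + delta)) = tR - INR tau - INR delta)
    by (rewrite minus_INR, plus_INR by auto; unfold tR; ring).
  rewrite Hn. split; [lia|]. split; [apply INR_lt; simpl; lra|].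
  pose proof (pos_INR tau). pose proof (pos_INR delta).
  split; [lra|]. split; [lra|]. split.
  - replace (2 * T) with (alpha * (2 * T / alpha)) by (field; lra).
    apply Rmult_le_compat_l; lra.
  - unfold lo, hi. split; nra.
Qed.

(* Each of the first L U + 1 windows is missed with probability <= 3 exp(-2T):
   (1 - alpha)^delta for staying attached and 2 exp(-2T) for the walk. *)
Lemma window_miss_bound i : INR i <= L * U + 1 ->
  Ex alpha beta init 0 t (fun s => ind (Miss i s)) <= 3 * exp (- (2 * T)).
Proof.
  intros Hi. destruct (window_schedule i Hi)
    as [tau [delta [n [Ht [Hn0 [Hr [Hnt [Hdelta [Hlo Hhi]]]]]]]]].
  pose proof (Sg_times_U tR c Ht1) as HSU. pose proof (T_times_U tR c Ht1) as HTU.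
  pose proof (T_ge1 tR c Ht1 Hc). pose proof (U_ge1 tR c Ht1 Hc). fold Sg T U in HSU, HTU, H, H0.
  assert (HSg : 0 < Sg) by (rewrite <- HTU; nra).
  assert (HnR : 0 < INR n) by (apply lt_0_INR; auto).
  apply Rle_trans with ((1 - alpha) ^ delta + 2 * exp (- ((4 * Sg) ^ 2 / (8 * INR n)))).
  { apply (window_bound alpha beta ltac:(lra) ltac:(lra) t tau delta n); auto. lra. }
  assert ((1 - alpha) ^ delta <= exp (- (2 * T))).
  { apply Rle_trans with (exp (- alpha) ^ delta).
    - apply pow_incr. split; [lra|]. pose proof (exp_ineq1_le (- alpha)). lra.
    - rewrite exp_pow. apply exp_le_mono. lra. }
  assert (exp (- ((4 * Sg) ^ 2 / (8 * INR n))) <= exp (- (2 * T))).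
  { apply exp_le_mono, Ropp_le_contravar.
    replace ((4 * Sg) ^ 2 / (8 * INR n)) with (2 * (Sg * Sg) / INR n) by (field; lra).
    apply Rmult_le_reg_r with (INR n); auto.
    replace (2 * (Sg * Sg) / INR n * INR n) with (2 * (Sg * Sg)) by (field; lra).
    assert (Sg * Sg = T * tR) by (rewrite <- HTU at 1; rewrite <- HSU; ring).
    nra. }
  lra.
Qed.
Lemma not_good_le_misses l s : WF t s -> L * U <= INR l ->
  ind (~ good_event beta 11 5 L c t s) <= sum_f_R0 (fun i => ind (Miss i s)) l.
Proof.
  intros HWF Hl. assert (Hmiss0 : forall j, 0 <= ind (Miss j s)) by (intros; apply ind_ge0).
  unfold ind at 1. destruct excluded_middle_informative as [Hbad|Hgood];
    [| apply cond_pos_sum; auto].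
  assert (exists i, (i <= l)%nat /\ Miss i s) as [i [Hi Hmiss]].
  { apply NNPP. intros Hall. apply Hbad.
    apply (good_event_of_windows beta 11 5 L c t s l HWF); try lra.
    - apply Rmult_lt_0_compat; [apply exp_pos | apply sqrt_lt_R0; fold tR; lra].
    - fold tR U. lra.
    - intros i Hi. apply NNPP. intros Hno. apply Hall. exists i. split; auto.
      intros [k Hk]. apply Hno. exists k. apply Rabs_le. unfold lo, hi, Sg in Hk. fold tR. lra. }
  apply Rle_trans with (ind (Miss i s)); [|apply (sum_ge_term (fun j => ind (Miss j s))); auto].
  unfold ind. destruct excluded_middle_informative; [lra | contradiction].
Qed.

(* Union bound over the at most U + 2 windows. *)
Lemma main_estimate : prob alpha beta t (good_event beta 11 5 L c t) >= 1 - exp (- T).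
Proof.
  pose proof (U_ge1 tR c Ht1 Hc) as HU. fold U in HU.
  assert (HL : 0 < L < 1) by (unfold L; split; [apply Rdiv_lt_0_compat|]; lra).
  destruct (nat_ceil (L * U) ltac:(nra)) as [l Hl].
  rewrite prob_Ex, Ex_ind_compl. apply Rle_ge.
  enough (Ex alpha beta init 0 t (fun s => ind (~ good_event beta 11 5 L c t s)) <= exp (- T)) by lra.
  apply Rle_trans with (Ex alpha beta init 0 t (fun s => sum_f_R0 (fun i => ind (Miss i s)) l)).
  { apply (Ex_mono alpha beta ltac:(lra) ltac:(lra) WF); [apply Stable_WF | apply WF_init |].
    intros s HWF. apply not_good_le_misses; [exact HWF | lra]. }
  rewrite Ex_sum. apply Rle_trans with (sum_f_R0 (fun _ => 3 * exp (- (2 * T))) l).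
  { apply sum_Rle. intros i Hi. apply window_miss_bound.
    apply Rle_trans with (INR l); [apply le_INR; lia | lra]. }
  rewrite sum_cte, S_INR.
  assert (INR l + 1 <= U + 2) by nra.
  assert (exp T * exp (- (2 * T)) = exp (- T)) by (rewrite <- exp_plus; f_equal; ring).
  pose proof (exp_pos (- (2 * T))). nra.
Qed.
End MainEstimate.

(* Theorem 7: Cb = 11, K = 5, L = (1 - beta)/44; the error term vanishes from
   the time N0 on where the scale conditions hold, and for earlier times the
   claimed bound is trivial. *)
Theorem mainTheorem7 (beta : R) (hbeta : 0 < beta < 1) :
  exists Cb : R, 0 < Cb /\
  forall (alpha c : R), 0 < alpha < 1 -> 0 < c < /2 ->
  exists K L : R, 0 < K /\ 0 < L /\
  exists eps : nat -> R, Un_cv eps 0 /\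
  forall t : nat, (1 <= t)%nat ->
    prob alpha beta t (good_event beta Cb K L c t)
      >= 1 - exp (- (1 + eps t) * Rpower (INR t) (2 * c)).
Proof.
  exists 11. split; [lra|]. intros alpha c Ha Hc.
  exists 5, ((1 - beta) / 44). split; [lra|]. split; [apply Rdiv_lt_0_compat; lra|].
  destruct (scale_conditions_eventually alpha beta c Ha hbeta Hc) as [N0 HN0].
  exists (fun t => if (t <? N0)%nat then -1 else 0). split.
  - intros e He. exists N0. intros n Hn.
    replace (n <? N0)%nat with false by (symmetry; apply Nat.ltb_ge; lia).
    unfold R_dist. rewrite Rminus_0_r, Rabs_R0. lra.
  - intros t _. destruct (t <? N0)%nat eqn:Et.
    + replace (- (1 + -1) * Rpower (INR t) (2 * c)) with 0 by ring. rewrite exp_0.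
      pose proof (prob_nonneg alpha beta ltac:(lra) ltac:(lra) t (good_event beta 11 5 ((1 - beta) / 44) c t)).
      lra.
    + apply Nat.ltb_ge in Et. destruct (HN0 t Et) as [Ht1 [Hdelay [Htime Hwindows]]].
      replace (- (1 + 0) * Rpower (INR t) (2 * c)) with (- Rpower (INR t) (2 * c)) by ring.
      apply main_estimate; auto.
Qed.
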